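(* Fix $a\in(0,2)$ and $\alpha\in[0,1]$, and let $\varepsilon=n^{-a}$. Let $S,S'\in\mathcal{O}^{\varepsilon,2}_{\alpha N}$ and let $\mathbf{S}$ have distribution $\mathbb{R}(n,\alpha N)$. Then \[ \frac{\Pr(\mathbf{S}=S)}{\Pr(\mathbf{S}=S')}\le\exp\left(O\left(n^{2-a}\right)\right). \]
   Context: Throughout, $n\equiv1$ or $3\pmod 6$, $N=\binom n2/3$, $\alpha N$ is treated as an integer, and asymptotics are as $n\to\infty$. A partial system is a 3-uniform hypergraph on $[n]$ in which every pair lies in at most one hyperedge; $\mathcal{O}_m$ is the set of ordered partial systems with $m$ hyperedges and $S_i$ the first $i$ hyperedges of $S$. $G(S)$ is the graph on $[n]$ of pairs not covered by hyperedges of $S$. For a graph $G$ with $n$ vertices and $m$ edges, $d(G)=m/\binom n2$, and $G$ is $(\varepsilon,h)$-quasirandom if every set $A$ of at most $h$ vertices satisfies $\left|\bigcap_{w\in A}N_G(w)\right|=(1\pm\varepsilon)d(G)^{|A|}n$. $\mathcal{O}^{\varepsilon,h}_m$ is the set of $S\in\mathcal{O}_m$ with $G(S_i)$ $(\varepsilon,h)$-quasirandom for all $i\le m$. The triangle removal process starts from $K_n$ and repeatedly removes the edges of a uniformly random triangle of the current graph; $\mathbb{R}(n,m)$ is the distribution of the ordered sequence of the first $m$ removed triangles (an element of $\mathcal{O}_m$), or the symbol $*$ if the process runs out of triangles before $m$ steps. *)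

From Stdlib Require Import Reals.
From mathcomp Require Import all_boot.
Local Open Scope R_scope.

Set Implicit Arguments.
Unset Strict Implicit.
Unset Printing Implicit Defensive.

(* A (partial) system is represented as a sequence of subsets of [n] = 'I_n
   (ordered: the i-th entry is the i-th hyperedge). *)

Definition partial_system (n : nat) (S : seq {set 'I_n}) : bool :=
  all (fun e : {set 'I_n} => (#|e| == 3)%N) S && pairwise (fun e f : {set 'I_n} => (#|e :&: f| <= 1)%N) S.

Definition in_O (n m : nat) (S : seq {set 'I_n}) : bool :=
  ((size S == m)%N && partial_system S).

Definition adjG (n : nat) (S : seq {set 'I_n}) (u v : 'I_n) : bool :=
  (u != v) && all (fun e : {set 'I_n} => ~~ ((u \in e) && (v \in e))) S.

Definition nbhd (n : nat) (S : seq {set 'I_n}) (w : 'I_n) : {set 'I_n} :=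
  [set v | adjG S w v].

Definition num_edges (n : nat) (S : seq {set 'I_n}) : nat :=
  #|[set p : 'I_n * 'I_n | (p.1 < p.2)%N && adjG S p.1 p.2]|.

Definition density (n : nat) (S : seq {set 'I_n}) : R :=
  INR (num_edges S) / INR 'C(n, 2).

(* G(S) is (eps,h)-quasirandom: every set A of at most h vertices has
   |common neighbourhood| = (1 +- eps) d^|A| n  (empty intersection = [n]). *)
Definition quasirandom (n : nat) (eps : R) (h : nat) (S : seq {set 'I_n}) : Prop :=
  forall A : {set 'I_n}, (#|A| <= h)%N ->
    Rabs (INR #|\bigcap_(w in A) nbhd S w| - density S ^ #|A| * INR n)
       <= eps * (density S ^ #|A| * INR n).

Definition in_Oqr (n : nat) (eps : R) (h m : nat) (S : seq {set 'I_n}) : Prop :=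
  in_O m S /\ forall i : nat, (i <= m)%N -> quasirandom eps h (take i S).

Definition is_triangle (n : nat) (S : seq {set 'I_n}) (t : {set 'I_n}) : bool :=
  (#|t| == 3)%N && [forall u in t, forall v in t, (u != v) ==> adjG S u v].

Definition num_triangles (n : nat) (S : seq {set 'I_n}) : nat :=
  #|[set t : {set 'I_n} | is_triangle S t]|.

(* Probability that the first (size S) triangles removed by the triangle
   removal process (started from K_n, each step removing a uniformly random
   triangle of the current graph) are exactly S, in order.  By the chain rule,
   at step i the current graph is G(S_i), and the i+1-st hyperedge is chosen
   with probability 1/T(G(S_i)) if it is a triangle of G(S_i), else 0.
   This is the point mass Pr(R(n,m) = S) for S of length m. *)
Definition removal_prob (n : nat) (S : seq {set 'I_n}) : R :=
  \big[Rmult/1]_(i < size S)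
     if is_triangle (take i S) (nth set0 S i)
      then / INR (num_triangles (take i S)) else 0.

(* In G(S_i) two adjacent vertices have (1 +- eps) d^2 n common neighbours, and
   6 T(G) is the number of ordered triangles, i.e. the sum of these codegrees
   over the ordered edges of G.  Removing a triangle deletes exactly three
   edges, so G(S_i) and G(S'_i) have the same number of edges, hence the same
   density, and their triangle counts differ by a factor at most
   (1 + eps) / (1 - eps).  Pr(S) is the product of the 1 / T(G(S_i)), so the
   ratio is at most ((1 + eps) / (1 - eps))^m <= exp (4 eps m), and
   eps m <= n^-a n^2 = n^(2-a). *)

From Stdlib Require Import Reals Lra.
From HB Require Import structures.
From mathcomp Require Import all_boot zify.

Set Implicit Arguments.
Unset Strict Implicit.
Unset Printing Implicit Defensive.

Lemma card_dep_pairs (T1 T2 : finType) (P : pred T1) (F : T1 -> {set T2}) :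
  #|[set x : T1 * T2 | P x.1 && (x.2 \in F x.1)]| = \sum_(u | P u) #|F u|.
Proof.
rewrite -sum1dep_card -(pair_big_dep P (fun u v => v \in F u) (fun _ _ => 1%N)).
by apply: eq_bigr => u _; rewrite sum1_card.
Qed.

Definition distinct_pairs (T : finType) (t : {set T}) : {set T * T} :=
  [set x | (x.1 \in t) && (x.2 \in t :\ x.1)].

Definition distinct_triples (T : finType) (t : {set T}) : {set (T * T) * T} :=
  [set x | (x.1 \in distinct_pairs t) && (x.2 \in t :\ x.1.1 :\ x.1.2)].

Lemma card_distinct_pairs (T : finType) (t : {set T}) :
  #|distinct_pairs t| = (#|t| * #|t|.-1)%N.
Proof.
rewrite /distinct_pairs (card_dep_pairs (fun u => u \in t) (fun u => t :\ u)).
rewrite (eq_bigr (fun _ => #|t|.-1)) ?sum_nat_const 1?mulnC //.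
by move=> u ut; rewrite (cardsD1 u t) ut.
Qed.

Lemma card_distinct_triples (T : finType) (t : {set T}) :
  #|distinct_triples t| = (#|t| * #|t|.-1 * #|t|.-2)%N.
Proof.
rewrite /distinct_triples.
rewrite (card_dep_pairs (fun p => p \in distinct_pairs t) (fun p => t :\ p.1 :\ p.2)).
rewrite (eq_bigr (fun _ => #|t|.-2)).
  by rewrite sum_nat_const card_distinct_pairs mulnC.
move=> [u v]; rewrite inE /= => /andP[ut vt].
by rewrite (cardsD1 u t) ut (cardsD1 v (t :\ u)) vt.
Qed.

Lemma card_set3 (T : finType) (a b c : T) :
  a != b -> b != c -> c != a -> #|[set a; b; c]| = 3%N.
Proof.
move=> ab bc ca; have -> : [set a; b; c] = [set x in [:: a; b; c]].
  by apply/setP => x; rewrite !inE orbA.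
by rewrite cardsE; apply/card_uniqP; rewrite /= !inE negb_or ab bc eq_sym ca.
Qed.

Section TriangleCounting.
Variable n : nat.
Implicit Types (s S : seq {set 'I_n}) (u v : 'I_n) (e t : {set 'I_n}).

Lemma adjG_sym s : symmetric (adjG s).
Proof. by move=> u v; rewrite /adjG eq_sym; congr (_ && _); apply: eq_all => e; rewrite andbC. Qed.

Lemma adjG_neq s u v : adjG s u v -> u != v.
Proof. by case/andP. Qed.

Lemma adjG_rcons s e u v :
  adjG (rcons s e) u v = adjG s u v && ~~ ((u \in e) && (v \in e)).
Proof. by rewrite /adjG all_rcons andbAC andbA. Qed.

Definition arcs s : {set 'I_n * 'I_n} := [set p | adjG s p.1 p.2].

Lemma num_edges_double s : (num_edges s * 2)%N = #|arcs s|.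
Proof.
set A := [set p : 'I_n * 'I_n | (p.1 < p.2)%N && adjG s p.1 p.2].
have arcsE : arcs s = A :|: [set (p.2, p.1) | p in A].
  apply/setP => -[u v]; rewrite !inE /=; apply/idP/idP.
  - move=> huv; have := adjG_neq huv; rewrite neq_ltn => /orP[lt|lt].
    + by rewrite lt huv.
    + by apply/orP; right; apply/imsetP; exists (v, u); rewrite // inE /= lt adjG_sym.
  - case/orP => [/andP[_ //] | /imsetP[[x y] /[!inE] /= /andP[_ hxy] [-> ->]]].
    by rewrite adjG_sym.
have disjA : A :&: [set (p.2, p.1) | p in A] = set0.
  apply/setP => -[u v]; rewrite !inE /=; apply/negP.
  by case/andP => /andP[lt _] /imsetP[[x y] /[!inE] /= /andP[lt' _] [? ?]]; subst; lia.
rewrite /num_edges -/A arcsE cardsU disjA cards0 subn0 card_imset ?muln2 ?addnn //.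
by move=> [x y] [x' y'] [-> ->].
Qed.

Lemma eq_density s s' : #|arcs s| = #|arcs s'| -> density s = density s'.
Proof.
move=> eq_arcs; rewrite /density; congr (Rdiv (INR _) _); apply/eqP.
by rewrite -(eqn_pmul2r (isT : 0 < 2)%N) !num_edges_double eq_arcs.
Qed.

Definition ordered_triangles s : {set ('I_n * 'I_n) * 'I_n} :=
  [set x | [&& adjG s x.1.1 x.1.2, adjG s x.1.1 x.2 & adjG s x.1.2 x.2]].

Lemma card_ordered_triangles_codegrees s :
  #|ordered_triangles s| = \sum_(p in arcs s) #|nbhd s p.1 :&: nbhd s p.2|.
Proof.
rewrite -(card_dep_pairs (fun p => p \in arcs s) (fun p => nbhd s p.1 :&: nbhd s p.2)).
by apply: eq_card => -[[u v] w]; rewrite !inE /= andbA.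
Qed.

Lemma is_triangleP s t :
  reflect (#|t| = 3 /\ {in t &, forall u v, u != v -> adjG s u v}) (is_triangle s t).
Proof.
apply: (iffP andP) => [[/eqP t3 /forallP adj_t] | [t3 adj_t]]; split => //.
- move=> u v ut vt; move/implyP/(_ ut)/forallP/(_ v): (adj_t u).
  by move/implyP/(_ vt)/implyP.
- exact/eqP.
- apply/forallP => u; apply/implyP => ut; apply/forallP => v.
  by apply/implyP => vt; apply/implyP; apply: adj_t.
Qed.

Lemma ordered_triangle_is_triangle s x :
  x \in ordered_triangles s -> is_triangle s [set x.1.1; x.1.2; x.2].
Proof.
case: x => [[u v] w]; rewrite inE /= => /and3P[huv huw hvw].
have nuv := adjG_neq huv; have nuw := adjG_neq huw; have nvw := adjG_neq hvw.
apply/is_triangleP; split; first by rewrite card_set3 // eq_sym.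
move=> x y; rewrite !inE => hx hy xy.
by case/orP: hx => [/orP[]|] /eqP ?; case/orP: hy => [/orP[]|] /eqP ?; subst;
   rewrite ?eqxx // in xy *; rewrite // adjG_sym.
Qed.

Lemma ordered_triangles_on s t : is_triangle s t ->
  [set x in ordered_triangles s | [set x.1.1; x.1.2; x.2] == t] = distinct_triples t.
Proof.
case/is_triangleP => t3 adj_t; apply/setP => -[[u v] w]; rewrite !inE /=.
apply/idP/idP.
- case/andP => /and3P[huv huw hvw] /eqP <-.
  rewrite !inE !eqxx ?orbT /= andbT.
  by rewrite eq_sym (adjG_neq huv) eq_sym (adjG_neq hvw) eq_sym (adjG_neq huw).
- case/and4P => /and3P[ut vu vt] wv wu wt.
  have uv : u != v by rewrite eq_sym.
  have vw : v != w by rewrite eq_sym.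
  have uw : u != w by rewrite eq_sym.
  rewrite !adj_t //= eqEcard (card_set3 uv vw wu) t3 leqnn andbT.
  by apply/subsetP => x; rewrite !inE => /orP[/orP[]|] /eqP ->.
Qed.

Lemma card_ordered_triangles s : #|ordered_triangles s| = (6 * num_triangles s)%N.
Proof.
rewrite -sum1_card (partition_big (fun x => [set x.1.1; x.1.2; x.2]) (is_triangle s));
  last exact: ordered_triangle_is_triangle.
rewrite /num_triangles -sum1dep_card big_distrr /=; apply: eq_bigr => t tri_t.
have /is_triangleP[t3 _] := tri_t.
by rewrite muln1 sum1dep_card ordered_triangles_on // card_distinct_triples t3.
Qed.

Lemma arcs_rcons_triangle s e : is_triangle s e -> #|arcs s| = (#|arcs (rcons s e)| + 6)%N.
Proof.
case/is_triangleP => e3 adj_e.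
have arcsE : arcs s = arcs (rcons s e) :|: distinct_pairs e.
  apply/setP => -[u v]; rewrite !inE /= adjG_rcons.
  have [huv | nuv] := boolP (adjG s u v).
    by rewrite eq_sym (adjG_neq huv); case: (u \in e); case: (v \in e).
  apply/esym/negP => /andP[ue /andP[vu ve]].
  by move: nuv; rewrite adj_e // eq_sym.
have disj : arcs (rcons s e) :&: distinct_pairs e = set0.
  apply/setP => -[u v]; rewrite !inE /= adjG_rcons.
  by case: (u \in e); case: (v \in e); rewrite /= ?andbF ?andbT.
by rewrite arcsE cardsU disj cards0 subn0 card_distinct_pairs e3.
Qed.

Lemma nth_is_triangle S i : partial_system S -> (i < size S)%N ->
  is_triangle (take i S) (nth set0 S i).
Proof.
case/andP => /allP card3 /pairwiseP meet1 lt_i_S; apply/is_triangleP.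
split; first exact/eqP/card3/mem_nth.
move=> u v ue ve uv; rewrite /adjG uv; apply/(all_nthP set0) => j.
rewrite size_take lt_i_S => lt_j_i; rewrite nth_take //.
apply/negP => /andP[uf vf].
have := meet1 set0 j i (ltn_trans lt_j_i lt_i_S) lt_i_S lt_j_i.
suff : (#|[set u; v]| <= #|nth set0 S j :&: nth set0 S i|)%N by rewrite cards2 uv; lia.
by apply/subset_leq_card/subsetP => x; rewrite !inE => /orP[] /eqP ->; apply/andP.
Qed.

Lemma arcs_take S i : partial_system S -> (i <= size S)%N ->
  (#|arcs (take i S)| + 6 * i)%N = #|arcs [::]|.
Proof.
move=> psS; elim: i => [|i IH] lt_i_S; first by rewrite take0 addn0.
rewrite -(IH (ltnW lt_i_S)) (arcs_rcons_triangle (nth_is_triangle psS lt_i_S)).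
by rewrite -(take_nth set0 lt_i_S) mulnS addnA.
Qed.

Lemma partial_system_size S : partial_system S -> (6 * size S <= n * n)%N.
Proof.
move=> psS; have := max_card (mem (arcs [::])).
rewrite card_prod card_ord -(arcs_take psS (leqnn _)).
exact: leq_trans (leq_addl _ _).
Qed.
End TriangleCounting.

Local Open Scope R_scope.

HB.instance Definition _ := Monoid.isComLaw.Build R 1 Rmult
  (fun x y z => esym (Rmult_assoc x y z)) Rmult_comm Rmult_1_l.

Lemma prodR_div (I : finType) (F G : I -> R) :
  \big[Rmult/1]_(i : I) F i / \big[Rmult/1]_(i : I) G i = \big[Rmult/1]_(i : I) (F i / G i).
Proof. by rewrite /Rdiv (big_morph Rinv Rinv_mult Rinv_1) -big_split. Qed.

Lemma prodR_le_pow (I : finType) (F : I -> R) (r : R) :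
  (forall i, 0 <= F i <= r) -> \big[Rmult/1]_(i : I) F i <= r ^ #|I|.
Proof.
move=> bounds; have -> : r ^ #|I| = \big[Rmult/1]_(i : I) r.
  by rewrite big_const; elim: #|I| => //= k ->.
suff : 0 <= \big[Rmult/1]_(i : I) F i <= \big[Rmult/1]_(i : I) r by case.
apply: (big_ind2 (fun x y => 0 <= x <= y)) => [|x1 x2 y1 y2 b1 b2|i _]; last exact: bounds.
- lra.
- split; [apply: Rmult_le_pos | apply: Rmult_le_compat]; lra.
Qed.

Lemma exp_pow x k : exp x ^ k = exp (INR k * x).
Proof. by rewrite -Rpower_pow /Rpower ?ln_exp //; apply: exp_pos. Qed.

Lemma ratio_le_exp eps : 0 <= eps <= / 2 -> (1 + eps) / (1 - eps) <= exp (4 * eps).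
Proof.
move=> eps_bounds; apply: Rle_trans (exp_ineq1_le _).
apply: (Rmult_le_reg_r (1 - eps)); first lra.
rewrite /Rdiv Rmult_assoc Rinv_l; nra.
Qed.

Lemma Rpower_opp_le_half a x : 0 < a -> Rpower 2 (/ a) <= x -> Rpower x (- a) <= / 2.
Proof.
move=> a_gt0 x_ge; have base_gt0 : 0 < Rpower 2 (/ a) by apply: exp_pos.
rewrite Rpower_Ropp; apply: Rinv_le_contravar; first lra.
have := @Rle_Rpower_l _ _ a (Rlt_le _ _ a_gt0) (conj base_gt0 x_ge).
by rewrite Rpower_mult Rinv_l ?Rpower_1; lra.
Qed.

Section QuasirandomTriangles.
Variables (n : nat) (eps : R).
Implicit Types s : seq {set 'I_n}.

Lemma codegree_bounds s (u v : 'I_n) : quasirandom eps 2 s -> u != v ->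
  (1 - eps) * (density s ^ 2 * INR n) <= INR #|nbhd s u :&: nbhd s v|
    <= (1 + eps) * (density s ^ 2 * INR n).
Proof.
move=> qr_s uv; have := qr_s [set u; v]; rewrite cards2 uv => /(_ (leqnn 2)).
rewrite big_setU1 ?big_set1 ?inE //=; split_Rabs; lra.
Qed.

Lemma ordered_triangles_bounds s : quasirandom eps 2 s ->
  (1 - eps) * (density s ^ 2 * INR n) * INR #|arcs s| <= INR #|ordered_triangles s|
    <= (1 + eps) * (density s ^ 2 * INR n) * INR #|arcs s|.
Proof.
move=> qr_s; rewrite card_ordered_triangles_codegrees -sum1_card.
apply: (big_ind2 (fun x y => (1 - eps) * _ * INR x <= INR y <= (1 + eps) * _ * INR x)).
- by rewrite /=; lra.
- by move=> x1 x2 y1 y2 b1 b2; rewrite !plus_INR; lra.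
- move=> [u v]; rewrite inE /= => huv.
  by have := codegree_bounds qr_s (adjG_neq huv); rewrite /=; lra.
Qed.

Lemma num_triangles_compare s s' : 0 <= eps <= 1 ->
  quasirandom eps 2 s -> quasirandom eps 2 s' -> #|arcs s| = #|arcs s'| ->
  (1 - eps) * INR (num_triangles s') <= (1 + eps) * INR (num_triangles s).
Proof.
move=> eps_bounds qr_s qr_s' eq_arcs.
have := ordered_triangles_bounds qr_s; have := ordered_triangles_bounds qr_s'.
rewrite -(eq_density eq_arcs) -eq_arcs !card_ordered_triangles !mult_INR.
set XQ := density s ^ 2 * INR n * INR #|arcs s|.
rewrite !Rmult_assoc -/XQ => -[_ upper'] [lower _].
have /= := Rmult_le_compat_l (1 - eps) _ _ ltac:(lra) upper'.
have /= := Rmult_le_compat_l (1 + eps) _ _ ltac:(lra) lower.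
lra.
Qed.
End QuasirandomTriangles.

Lemma div_le_ratio eps x y : 0 < x -> eps < 1 ->
  (1 - eps) * y <= (1 + eps) * x -> y / x <= (1 + eps) / (1 - eps).
Proof.
move=> x_gt0 eps_lt1 le_yx.
have den_gt0 : 0 < / ((1 - eps) * x) by apply/Rinv_0_lt_compat/Rmult_lt_0_compat; lra.
have -> : y / x = (1 - eps) * y * / ((1 - eps) * x) by field; split; lra.
have -> : (1 + eps) / (1 - eps) = (1 + eps) * x * / ((1 - eps) * x) by field; split; lra.
by apply: Rmult_le_compat_r; first lra.
Qed.

Lemma num_triangles_take_gt0 n (S : seq {set 'I_n}) i :
  partial_system S -> (i < size S)%N -> 0 < INR (num_triangles (take i S)).
Proof.
move=> psS lt_i_S; apply/lt_0_INR/ssrnat.ltP/card_gt0P.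
by exists (nth set0 S i); rewrite inE nth_is_triangle.
Qed.

Lemma removal_prob_partial_system n (S : seq {set 'I_n}) : partial_system S ->
  removal_prob S = \big[Rmult/1]_(i < size S) / INR (num_triangles (take i S)).
Proof. by move=> psS; apply: eq_bigr => i _; rewrite nth_is_triangle. Qed.

Lemma removal_prob_ratio_le n eps m (S S' : seq {set 'I_n}) : 0 <= eps < 1 ->
  in_Oqr eps 2 m S -> in_Oqr eps 2 m S' ->
  removal_prob S / removal_prob S' <= ((1 + eps) / (1 - eps)) ^ m.
Proof.
move=> eps_bounds [/andP[/eqP sizeS psS] qr_S] [/andP[/eqP sizeS' psS'] qr_S'].
rewrite !removal_prob_partial_system // sizeS sizeS' prodR_div.
rewrite -[m in _ ^ m]card_ord; apply: prodR_le_pow => -[i lt_i_m] /=.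
rewrite /Rdiv Rinv_inv Rmult_comm.
have T_gt0 := num_triangles_take_gt0 psS (i := i) ltac:(by rewrite sizeS).
split; first by apply/Rmult_le_pos/Rlt_le/Rinv_0_lt_compat => //; apply: pos_INR.
apply: div_le_ratio => //; first lra.
apply: num_triangles_compare (qr_S _ (ltnW lt_i_m)) (qr_S' _ (ltnW lt_i_m)) _; first lra.
by apply/eqP; rewrite -(eqn_add2r (6 * i)) !arcs_take ?sizeS ?sizeS' ?(ltnW lt_i_m).
Qed.

Lemma Rpower_two_sub x a : 0 < x -> Rpower x (2 - a) = x * x * Rpower x (- a).
Proof.
move=> x_gt0; have two : INR 2 = 2 by rewrite /=; lra.
by rewrite /Rminus Rpower_plus -two Rpower_pow //= Rmult_1_r.
Qed.

Unset Implicit Arguments.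

Theorem lemma2p7 (a alpha : R) (ha : 0 < a < 2) (halpha : 0 <= alpha <= 1) :
  exists C : R, exists n0 : nat,
  forall n : nat, (n0 <= n)%N -> (n %% 6 = 1 \/ n %% 6 = 3)%N ->
  forall m : nat,
    INR m <= alpha * (INR 'C(n, 2) / 3) < INR m + 1 ->
  forall S S' : seq {set 'I_n},
    in_Oqr (Rpower (INR n) (- a)) 2 m S ->
    in_Oqr (Rpower (INR n) (- a)) 2 m S' ->
    removal_prob S / removal_prob S' <= exp (C * Rpower (INR n) (2 - a)).
Proof.
have [N N_gt] := INR_unbounded (Rpower 2 (/ a)).
exists 4, (maxn N 1) => n n_large _ m _ S S' qr_S qr_S'.
rewrite geq_max in n_large; case/andP: n_large => N_le_n n_gt0.
set eps := Rpower (INR n) (- a) in qr_S qr_S' *.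
have eps_ge0 : 0 <= eps by apply/Rlt_le/exp_pos.
have eps_le_half : eps <= / 2.
  apply: Rpower_opp_le_half; first lra.
  by apply/Rlt_le/(Rlt_le_trans _ _ _ N_gt)/le_INR/ssrnat.leP.
have m_le : (m <= n * n)%N.
  by case: qr_S => /andP[/eqP <- /partial_system_size]; lia.
set r := (1 + eps) / (1 - eps).
have r_ge1 : 1 <= r.
  by apply: (Rmult_le_reg_r (1 - eps)); rewrite /r /Rdiv ?Rmult_assoc ?Rinv_l; lra.
apply: Rle_trans (removal_prob_ratio_le _ qr_S qr_S') _; first lra.
apply: Rle_trans (Rle_pow _ _ _ r_ge1 (ssrnat.leP m_le)) _.
have r_le := ratio_le_exp (conj eps_ge0 eps_le_half).
apply: Rle_trans (pow_incr _ _ _ (conj (Rle_trans _ _ _ Rle_0_1 r_ge1) r_le)) _.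
rewrite exp_pow Rpower_two_sub -/eps ?mult_INR; first by apply: Req_le; congr exp; ring.
by apply/lt_0_INR/ssrnat.leP.
Qed.
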